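(* Consider, for $x\ge0$, the planar system $$\dot x=1,\qquad \dot y=-ay-\sin\!\left[\pi x\left(1+\tfrac12\lambda\right)\right],$$ with $\lambda=\operatorname{sign}(y)$ for $y\ne0$ and $\lambda\in(-1,1)$ on $y=0$. For all $a>0$ there exist solutions that start in $S_+=\{y>0\}$ and whose evolution is constrained to $\overline S_-=\{y\le0\}$ for all $x>x_{T_a}$, where $x_{T_a}$ denotes the smallest $x$ at which they hit the switching line $y=0$. Moreover, these solutions coincide with the periodic solution $y_d$ described below for $x\ge 4n$, for some $n\in\mathbb{N}$.
   Context: For $y>0$ the system is $\dot y=-ay-\sin(3\pi x/2)$ and for $y<0$ it is $\dot y=-ay-\sin(\pi x/2)$. The sliding manifold is $\Lambda^N=\{(x,0):x\in(\frac{2n}{3},2n),\ n\ge1\}$; a solution may remain on $y=0$ (with $\dot x=1$) over an interval only while on $\Lambda^N$. The function $y_d$ is the sliding $4$-periodic solution lying in $\{y\le0\}$ with $y_d(x)<0$ for $x\in(4n,4n+x_a)$ and $y_d(x)=0$ for $x\in\{0\}\cup[4n+x_a,4(n+1)]$, $n\in\mathbb{N}$, where $x_a\in(2,4)$ is the first positive return to $y=0$ of the solution of $\dot y=-ay-\sin(\pi x/2)$, $y(0)=0$. *)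

From Stdlib Require Import Reals Lra.
From Coquelicot Require Import Coquelicot.
Open Scope R_scope.

Definition lam_adm (y lam : R) : Prop :=
  (0 < y /\ lam = 1) \/ (y < 0 /\ lam = -1) \/ (y = 0 /\ -1 < lam < 1).

(** Right-hand side of  dy/dx = -a y - sin(pi x (1 + lambda/2))  (dx/dt = 1,
    so x is used as the time variable). *)
Definition field (a x y lam : R) : R := - a * y - sin (PI * x * (1 + lam / 2)).

Definition negligible (N : R -> Prop) : Prop :=
  forall eps, 0 < eps ->
  exists l r : nat -> R,
    (forall n, l n <= r n) /\
    (forall x, N x -> exists n, l n < x < r n) /\
    (forall m, sum_f_R0 (fun n => r n - l n) m <= eps).

Definition abs_cont_on (y : R -> R) (c d : R) : Prop :=
  forall eps, 0 < eps -> exists delta, 0 < delta /\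
  forall (n : nat) (u v : nat -> R),
    (forall i, (i <= n)%nat -> c <= u i /\ u i <= v i /\ v i <= d) ->
    (forall i, (i < n)%nat -> v i <= u (S i)) ->
    sum_f_R0 (fun i => v i - u i) n < delta ->
    sum_f_R0 (fun i => Rabs (y (v i) - y (u i))) n < eps.

Definition is_solution (a x0 : R) (y : R -> R) : Prop :=
  0 <= x0 /\
  (forall d, x0 <= d -> abs_cont_on y x0 d) /\
  exists N : R -> Prop, negligible N /\
    forall x, x0 < x -> ~ N x ->
      exists lam, lam_adm (y x) lam /\ is_derive y x (field a x (y x) lam).

(** The 4-periodic sliding solution y_d, built from phi (the solution of
    y' = -a y - sin(pi x/2), y(0) = 0) and its first positive zero xa:
    y_d(4n + r) = phi r for r in [0, xa), and 0 for r in [xa, 4). *)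
Definition yd (phi : R -> R) (xa x : R) : R :=
  let r := x - 4 * IZR (Int_part (x / 4)) in
  if Rlt_dec r xa then phi r else 0.

From Stdlib Require Import Reals Lra Lia.
From Coquelicot Require Import Coquelicot.
Open Scope R_scope.

(* The solution starts at [x = 3/2] on the solution [g] of the upper system with
   [g 2 = 0]; since the forcing [sin (3 PI x / 2)] is positive on (4/3, 2), the
   factor [exp (a x) g x] decreases there, so [g > 0] before 2.  On [2, 4] it slides
   along [y = 0]: for [x > 1] some [lam] in (-1, 1) makes [x (1 + lam/2)] an integer,
   so [y = 0] solves the equation.  From [x = 4] on it follows [y_d].  That [y_d <= 0]
   rests on [phi < 0] on (0, xa): [phi < 0] on (0, 2] by the same monotonicity
   argument, and [phi (t + 2) + phi t = phi 2 exp (- a t)] gives [phi 4 > 0], so the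
   first zero satisfies [xa <= 4].  The glued function is Lipschitz on bounded
   intervals, hence absolutely continuous, and satisfies the differential inclusion
   off the countable set of junction points. *)

Definition lipschitz_on (f : R -> R) (p q : R) : Prop :=
  exists L, forall u v, p <= u -> u <= v -> v <= q -> Rabs (f v - f u) <= L * (v - u).

Lemma lipschitz_on_glue f p q r :
  lipschitz_on f p q -> lipschitz_on f q r -> lipschitz_on f p r.
Proof.
  intros [L1 H1] [L2 H2]. exists (Rmax L1 L2). intros u v Hu Huv Hv.
  pose proof (Rmax_l L1 L2). pose proof (Rmax_r L1 L2).
  destruct (Rle_dec v q) as [Hvq|Hvq]; [|destruct (Rle_dec q u) as [Hqu|Hqu]].
  - specialize (H1 u v Hu Huv Hvq). nra.
  - specialize (H2 u v Hqu Huv Hv). nra.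
  - specialize (H1 u q Hu ltac:(lra) ltac:(lra)).
    specialize (H2 q v ltac:(lra) ltac:(lra) Hv).
    replace (f v - f u) with ((f v - f q) + (f q - f u)) by ring.
    eapply Rle_trans; [apply Rabs_triang|]. nra.
Qed.

Lemma lipschitz_on_sub f p q p' q' :
  lipschitz_on f p q -> p <= p' -> q' <= q -> lipschitz_on f p' q'.
Proof. intros [L H] ? ?. exists L. intros u v ? ? ?. apply H; lra. Qed.

Lemma lipschitz_on_ext f g p q :
  lipschitz_on f p q -> (forall x, p <= x <= q -> g x = f x) -> lipschitz_on g p q.
Proof.
  intros [L H] E. exists L. intros u v ? ? ?. rewrite !E by lra. apply H; lra.
Qed.

Lemma lipschitz_on_shift f p q s :
  lipschitz_on f p q -> lipschitz_on (fun x => f (x - s)) (p + s) (q + s).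
Proof.
  intros [L H]. exists L. intros u v ? ? ?.
  replace (v - u) with ((v - s) - (u - s)) by ring. apply H; lra.
Qed.

Lemma lipschitz_on_const c p q : lipschitz_on (fun _ => c) p q.
Proof.
  exists 0. intros u v _ _ _. rewrite Rminus_diag, Rabs_R0. lra.
Qed.

Lemma lipschitz_on_chain f p h n :
  (forall k, lipschitz_on f (p + INR k * h) (p + INR (S k) * h)) ->
  lipschitz_on f p (p + INR n * h).
Proof.
  intro Hk. induction n as [|n IH].
  - rewrite Rmult_0_l, Rplus_0_r. exists 0. intros u v ? ? ?.
    replace v with u by lra. rewrite Rminus_diag, Rabs_R0. lra.
  - exact (lipschitz_on_glue _ _ _ _ IH (Hk n)).
Qed.

Lemma lipschitz_on_continuous_derive f f' p q :
  (forall x, p <= x <= q -> is_derive f x (f' x)) ->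
  (forall x, p <= x <= q -> continuity_pt f' x) -> lipschitz_on f p q.
Proof.
  intros Hd Hc. destruct (Rle_dec p q) as [Hpq|Hpq].
  2:{ exists 0. intros. lra. }
  destruct (continuity_ab_maj (fun x => Rabs (f' x)) p q Hpq) as [m [Hm _]].
  { intros x Hx. apply continuity_pt_comp with (f2 := Rabs); [now apply Hc|].
    apply Rcontinuity_abs. }
  exists (Rabs (f' m)). intros u v Hu Huv Hv.
  destruct (Req_dec u v) as [<-|Hne].
  { rewrite !Rminus_diag, Rabs_R0. lra. }
  destruct (MVT_cor2 f f' u v ltac:(lra)) as [c [Hc' Hcuv]].
  { intros c Hcuv. apply is_derive_Reals, Hd. lra. }
  rewrite Hc', Rabs_mult, (Rabs_right (v - u)) by lra.
  apply Rmult_le_compat_r; [lra|]. apply Hm. lra.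
Qed.

Lemma lipschitz_on_abs_cont f c d : lipschitz_on f c d -> abs_cont_on f c d.
Proof.
  intros [L H] eps Heps. set (M := Rmax L 1).
  assert (HM : 0 < M) by (pose proof (Rmax_r L 1); unfold M; lra).
  exists (eps / M). split; [apply Rdiv_lt_0_compat; lra|].
  intros n u v Huv _ Hsum.
  apply Rle_lt_trans with (sum_f_R0 (fun i => (v i - u i) * M) n).
  { apply sum_Rle. intros i Hi. destruct (Huv i Hi) as [? [? ?]].
    eapply Rle_trans; [apply H; lra|]. rewrite (Rmult_comm _ M).
    apply Rmult_le_compat_r; [lra|apply Rmax_l]. }
  rewrite <- scal_sum, Rmult_comm.
  apply (Rmult_lt_compat_r M) in Hsum; [|lra].
  unfold Rdiv in Hsum. rewrite Rmult_assoc, Rinv_l, Rmult_1_r in Hsum by lra. exact Hsum.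
Qed.

Lemma sum_geometric_halves eps m :
  sum_f_R0 (fun n => eps / 2 ^ S n) m = eps - eps / 2 ^ S m.
Proof.
  induction m as [|m IH]; [simpl; field|].
  rewrite tech5, IH. simpl. field. apply pow_nonzero. lra.
Qed.

Lemma negligible_enum (N : R -> Prop) (e : nat -> R) :
  (forall x, N x -> exists n, x = e n) -> negligible N.
Proof.
  intros HN eps Heps.
  assert (Hr : forall n, 0 < eps / 2 ^ S (S n)).
  { intro n. apply Rdiv_lt_0_compat; [lra|apply pow_lt; lra]. }
  exists (fun n => e n - eps / 2 ^ S (S n)), (fun n => e n + eps / 2 ^ S (S n)).
  split; [|split].
  - intro n. specialize (Hr n). lra.
  - intros x Hx. destruct (HN x Hx) as [n ->]. exists n. specialize (Hr n). lra.
  - intro m. rewrite (sum_eq _ (fun n => eps / 2 ^ S n)).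
    + rewrite sum_geometric_halves.
      assert (0 < eps / 2 ^ S m) by (apply Rdiv_lt_0_compat; [lra|apply pow_lt; lra]).
      lra.
    + intros i _. simpl. field. apply pow_nonzero. lra.
Qed.

Section LinearODE.
Variables (a : R) (s h : R -> R).
Hypothesis h_derive : forall t, is_derive h t (- a * h t - s t).

Lemma exp_weighted_derive t :
  is_derive (fun t => exp (a * t) * h t) t (- exp (a * t) * s t).
Proof.
  evar (d : R). replace (- exp (a * t) * s t) with d; subst d.
  - apply (is_derive_mult (fun t => exp (a * t)) h); [|apply h_derive|].
    + auto_derive; [exact I|reflexivity].
    + intros; apply Rmult_comm.
  - unfold plus, mult; simpl. ring.
Qed.

Lemma exp_weighted_decrease p q :
  p < q -> (forall t, p < t < q -> 0 < s t) ->
  exp (a * q) * h q < exp (a * p) * h p.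
Proof.
  intros Hpq Hs.
  destruct (MVT_cor2 (fun t => exp (a * t) * h t) (fun t => - exp (a * t) * s t) p q Hpq)
    as [c [Hc Hcpq]].
  { intros c _. apply is_derive_Reals, exp_weighted_derive. }
  assert (0 < exp (a * c) * s c * (q - p)).
  { repeat apply Rmult_lt_0_compat; [apply exp_pos|apply Hs; lra|lra]. }
  lra.
Qed.

End LinearODE.

Lemma linear_homogeneous_sol (a : R) (h : R -> R) :
  (forall t, is_derive h t (- a * h t)) -> forall t, h t = h 0 * exp (- a * t).
Proof.
  intros Hd t.
  set (w t := exp (a * t) * h t).
  assert (Hw : forall u v, u < v -> w u = w v).
  { intros u v Huv. apply eq_is_derive; [|exact Huv]. intros c _.
    replace (@zero R_NormedModule) with (- exp (a * c) * (fun _ => 0) c) by (cbn; ring).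
    apply (exp_weighted_derive a (fun _ => 0) h). intro x. rewrite Rminus_0_r. apply Hd. }
  assert (Hwt : w t = w 0).
  { destruct (Rtotal_order t 0) as [Ht|[->|Ht]]; [apply Hw|reflexivity|symmetry; apply Hw]; lra. }
  unfold w in Hwt. rewrite Rmult_0_r, exp_0, Rmult_1_l in Hwt.
  assert (E : exp (a * t) * exp (- a * t) = 1).
  { rewrite <- exp_plus, <- exp_0. f_equal. ring. }
  rewrite <- Hwt. transitivity (h t * (exp (a * t) * exp (- a * t))); [rewrite E|]; ring.
Qed.

Lemma sine_forced_sol (a w x1 y1 : R) : a <> 0 ->
  exists h, h x1 = y1 /\ forall x, is_derive h x (- a * h x - sin (w * x)).
Proof.
  intro Ha. set (D := a ^ 2 + w ^ 2).
  assert (HD : D <> 0) by (unfold D; nra).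
  set (p x := (a * sin (w * x) - w * cos (w * x)) / D).
  exists (fun x => (y1 + p x1) * exp (a * x1) * exp (- a * x) - p x). split.
  - rewrite Rmult_assoc, <- exp_plus. replace (a * x1 + - a * x1) with 0 by ring.
    rewrite exp_0. ring.
  - intro x. unfold p. auto_derive; [exact I|]. unfold D in *. field. exact HD.
Qed.

Lemma continuity_pt_is_derive (f : R -> R) x l : is_derive f x l -> continuity_pt f x.
Proof. intro Hf. apply derivable_continuous_pt. exists l. now apply is_derive_Reals. Qed.

Lemma lipschitz_on_forced_linear (a : R) (s h : R -> R) p q :
  (forall x, is_derive h x (- a * h x - s x)) -> (forall x, continuity_pt s x) ->
  lipschitz_on h p q.
Proof.
  intros Hd Hs. apply (lipschitz_on_continuous_derive h (fun x => - a * h x - s x));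
    [intros; apply Hd|].
  intros x _. apply continuity_pt_minus; [|apply Hs].
  apply continuity_pt_mult; [apply continuity_pt_const; intros ? ?; reflexivity|].
  eapply continuity_pt_is_derive, Hd.
Qed.

Lemma is_derive_translate (f : R -> R) s x l :
  is_derive f (x + s) l -> is_derive (fun t => f (t + s)) x l.
Proof.
  intro Hf. evar (d : R). replace l with d; subst d.
  - apply (is_derive_comp f (fun t => t + s)); [exact Hf|].
    auto_derive; [exact I|reflexivity].
  - unfold scal; simpl. unfold mult; simpl. ring.
Qed.

Definition filippov_at (a : R) (y : R -> R) (x : R) : Prop :=
  exists lam, lam_adm (y x) lam /\ is_derive y x (field a x (y x) lam).

Lemma filippov_at_local a (y h : R -> R) x p q lam :
  p < x < q -> (forall t, p < t < q -> y t = h t) ->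
  lam_adm (h x) lam -> is_derive h x (field a x (h x) lam) -> filippov_at a y x.
Proof.
  intros Hx Hyh Hadm Hd. exists lam. rewrite Hyh by exact Hx. split; [exact Hadm|].
  apply is_derive_ext_loc with h; [|exact Hd].
  assert (Hr : 0 < Rmin (x - p) (q - x)) by (apply Rmin_pos; lra).
  exists (mkposreal _ Hr). intros t Ht.
  change (Rabs (t - x) < Rmin (x - p) (q - x)) in Ht.
  apply Rabs_def2 in Ht. pose proof (Rmin_l (x - p) (q - x)). pose proof (Rmin_r (x - p) (q - x)).
  symmetry. apply Hyh. lra.
Qed.

(* [x (1 + lam/2)] sweeps (x/2, 3x/2), which contains an integer once [x > 1]. *)
Lemma sliding_lambda x : 1 < x -> exists lam, -1 < lam < 1 /\ sin (PI * x * (1 + lam / 2)) = 0.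
Proof.
  intro Hx. destruct (archimed (x / 2)) as [Hup1 Hup2].
  set (z := IZR (up (x / 2))) in *.
  exists (2 * (z / x) - 2).
  assert (Hz : z = z / x * x) by (field; lra).
  split; [split; nra|].
  apply sin_eq_0_1. exists (up (x / 2)). fold z. field. lra.
Qed.

Lemma filippov_at_zero a (y : R -> R) x p q :
  1 < x -> p < x < q -> (forall t, p < t < q -> y t = 0) -> filippov_at a y x.
Proof.
  intros H1x Hx Hy. destruct (sliding_lambda x H1x) as [lam [Hlam Hsin]].
  apply (filippov_at_local a y (fun _ => 0) x p q lam Hx Hy).
  - right; right. split; [reflexivity|exact Hlam].
  - unfold field. rewrite Hsin, Rmult_0_r, Rminus_0_r. exact (is_derive_const 0 x).
Qed.

Lemma decomp_period x : 0 <= x -> exists (k : nat) r, x = 4 * INR k + r /\ 0 <= r < 4.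
Proof.
  intro Hx. destruct (base_Int_part (x / 4)) as [H1 H2].
  assert (Hz : (0 <= Int_part (x / 4))%Z).
  { apply le_IZR. assert (IZR (Int_part (x / 4)) > -1) as Hgt by lra.
    apply lt_IZR in Hgt. apply IZR_le. lia. }
  exists (Z.to_nat (Int_part (x / 4))), (x - 4 * IZR (Int_part (x / 4))).
  rewrite INR_IZR_INZ, Znat.Z2Nat.id by exact Hz. split; [ring|lra].
Qed.

Section PeriodicSolution.
Variables (phi : R -> R) (xa : R).
Hypothesis phi_0 : phi 0 = 0.

Lemma yd_period_eq (k : nat) r : 0 <= r < 4 ->
  yd phi xa (4 * INR k + r) = if Rlt_dec r xa then phi r else 0.
Proof.
  intro Hr. unfold yd.
  assert (E : Int_part ((4 * INR k + r) / 4) = Z.of_nat k).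
  { symmetry. apply Int_part_spec. rewrite <- INR_IZR_INZ. lra. }
  rewrite E, <- INR_IZR_INZ. now replace (4 * INR k + r - 4 * INR k) with r by ring.
Qed.

Lemma yd_period_start (k : nat) : yd phi xa (4 * INR k) = 0.
Proof.
  rewrite <- (Rplus_0_r (4 * INR k)), yd_period_eq by lra.
  now destruct (Rlt_dec 0 xa).
Qed.

Lemma yd_on_phi_arc (k : nat) x : phi xa = 0 -> xa <= 4 ->
  4 * INR k <= x <= 4 * INR k + xa -> yd phi xa x = phi (x - 4 * INR k).
Proof.
  intros Hxa Hxa4 Hx. destruct (Req_dec x (4 * INR k + 4)) as [->|Hne].
  - replace (4 * INR k + 4) with (4 * INR (S k)) by (rewrite S_INR; ring).
    rewrite yd_period_start. replace (4 * INR (S k) - 4 * INR k) with xa by (rewrite S_INR; lra).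
    now rewrite Hxa.
  - replace x with (4 * INR k + (x - 4 * INR k)) at 1 by ring.
    rewrite yd_period_eq by lra. destruct (Rlt_dec (x - 4 * INR k) xa); [reflexivity|].
    now replace (x - 4 * INR k) with xa by lra.
Qed.

Lemma yd_on_sliding_arc (k : nat) x : 0 <= xa ->
  4 * INR k + xa <= x <= 4 * INR k + 4 -> yd phi xa x = 0.
Proof.
  intros Hxa Hx. destruct (Req_dec x (4 * INR k + 4)) as [->|Hne].
  - replace (4 * INR k + 4) with (4 * INR (S k)) by (rewrite S_INR; ring).
    apply yd_period_start.
  - replace x with (4 * INR k + (x - 4 * INR k)) at 1 by ring.
    rewrite yd_period_eq by lra. destruct (Rlt_dec (x - 4 * INR k) xa); [lra|reflexivity].
Qed.

Lemma yd_nonpos x : (forall r, 0 <= r < xa -> phi r <= 0) -> yd phi xa x <= 0.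
Proof.
  intro Hneg. unfold yd; cbv zeta. destruct (base_Int_part (x / 4)).
  destruct (Rlt_dec _ xa); [apply Hneg; split; [lra|assumption] | lra].
Qed.

End PeriodicSolution.

Section FirstArc.
Variables (a : R) (phi : R -> R) (xa : R).
Hypotheses (a_pos : 0 < a) (phi_0 : phi 0 = 0)
  (phi_derive : forall x, is_derive phi x (- a * phi x - sin (PI * x / 2)))
  (phi_nz : forall x, 0 < x < xa -> phi x <> 0).

Lemma phi_neg_upto2 x : 0 < x <= 2 -> phi x < 0.
Proof.
  intro Hx.
  assert (Hs : forall t, 0 < t < x -> 0 < sin (PI * t / 2)).
  { intros t Ht. pose proof PI_RGT_0. apply sin_gt_0; nra. }
  pose proof (exp_weighted_decrease a _ phi phi_derive 0 x ltac:(lra) Hs) as Hlt.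
  rewrite phi_0, Rmult_0_r in Hlt. pose proof (exp_pos (a * x)). nra.
Qed.

(* [sin (PI (t + 2) / 2) = - sin (PI t / 2)], so [phi (t + 2) + phi t] solves the
   homogeneous equation. *)
Lemma phi_half_period t : phi (t + 2) + phi t = phi 2 * exp (- a * t).
Proof.
  set (h t := phi (t + 2) + phi t).
  assert (Hh : forall t, is_derive h t (- a * h t)).
  { intro u. unfold h. evar (d : R). replace (- a * (phi (u + 2) + phi u)) with d; subst d.
    - apply (is_derive_plus (fun t => phi (t + 2)) phi);
        [apply is_derive_translate, phi_derive | apply phi_derive].
    - unfold plus; simpl.
      replace (PI * (u + 2) / 2) with (PI * u / 2 + PI) by field.
      rewrite neg_sin. ring. }
  pose proof (linear_homogeneous_sol a h Hh t) as E. unfold h in E.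
  rewrite Rplus_0_l, phi_0, Rplus_0_r in E. exact E.
Qed.

Lemma phi_4_pos : 0 < phi 4.
Proof.
  pose proof (phi_half_period 2) as E. replace (2 + 2) with 4 in E by ring.
  pose proof (phi_neg_upto2 2 ltac:(lra)).
  assert (exp (- a * 2) < 1) by (rewrite <- exp_0; apply exp_increasing; lra).
  nra.
Qed.

Lemma phi_continuous : continuity phi.
Proof.
  intro x. eapply continuity_pt_is_derive, phi_derive.
Qed.

Lemma phi_neg x : 0 < x < xa -> phi x < 0.
Proof.
  intro Hx. destruct (Rle_dec x 2) as [Hx2|Hx2]; [apply phi_neg_upto2; lra|].
  destruct (Rlt_dec (phi x) 0) as [|Hge]; [assumption|].
  assert (Hpos : 0 < phi x) by (pose proof (phi_nz x Hx); lra).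
  pose proof (phi_neg_upto2 2 ltac:(lra)) as H2.
  destruct (IVT phi 2 x phi_continuous ltac:(lra) H2 Hpos) as [z [Hz Hz0]].
  exfalso. apply (phi_nz z); [|exact Hz0].
  split; [lra|]. destruct (Req_dec z x) as [->|]; lra.
Qed.

Lemma first_zero_le4 : xa <= 4.
Proof.
  destruct (Rle_dec xa 4) as [|H]; [assumption|].
  pose proof (phi_neg 4 ltac:(lra)). pose proof phi_4_pos. lra.
Qed.

End FirstArc.

Lemma upper_arc a : a <> 0 ->
  exists g, g 2 = 0 /\ (forall x, is_derive g x (field a x (g x) 1)) /\
            (forall x, 4/3 <= x < 2 -> 0 < g x).
Proof.
  intro Ha. destruct (sine_forced_sol a (PI * (1 + 1/2)) 2 0 Ha) as [g [Hg2 Hgd]].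
  assert (Hd : forall x, is_derive g x (field a x (g x) 1)).
  { intro x. unfold field. replace (PI * x * (1 + 1/2)) with (PI * (1 + 1/2) * x) by ring.
    apply Hgd. }
  exists g. split; [exact Hg2|]. split; [exact Hd|].
  intros x Hx.
  assert (Hs : forall t, x < t < 2 -> 0 < sin (PI * t * (1 + 1/2))).
  { intros t Ht. pose proof PI_RGT_0.
    replace (PI * t * (1 + 1/2)) with ((PI * t * (1 + 1/2) - 2 * PI) + 2 * INR 1 * PI)
      by (simpl; ring).
    rewrite sin_period. apply sin_gt_0; nra. }
  pose proof (exp_weighted_decrease a _ g Hd x 2 ltac:(lra) Hs) as Hlt.
  rewrite Hg2, Rmult_0_r in Hlt. pose proof (exp_pos (a * x)). nra.
Qed.

Definition switch_point (xa x : R) : Prop :=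
  x = 2 \/ exists k : nat, x = 4 * INR k \/ x = 4 * INR k + xa.

Lemma switch_point_negligible xa : negligible (switch_point xa).
Proof.
  apply (negligible_enum _ (fun n => match n with
    | O => 2
    | S m => 4 * INR (Nat.div2 m) + if Nat.odd m then xa else 0 end)).
  intros x [ -> | [k [ -> | -> ]]].
  - now exists O.
  - exists (S (2 * k)). now rewrite Nat.div2_double, Nat.odd_even, Rplus_0_r.
  - exists (S (2 * k + 1)). now rewrite Nat.odd_odd, Nat.add_1_r, Nat.div2_succ_double.
Qed.

Definition captured_sol (g phi : R -> R) (xa x : R) : R :=
  if Rlt_dec x 2 then g x else if Rlt_dec x 4 then 0 else yd phi xa x.

Section Construction.
Variables (a : R) (phi g : R -> R) (xa : R).
Hypotheses (phi_0 : phi 0 = 0) (phi_xa : phi xa = 0)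
  (phi_derive : forall x, is_derive phi x (- a * phi x - sin (PI * x / 2)))
  (phi_neg : forall x, 0 < x < xa -> phi x < 0)
  (xa_pos : 0 < xa) (xa_le4 : xa <= 4)
  (g_2 : g 2 = 0) (g_derive : forall x, is_derive g x (field a x (g x) 1))
  (g_pos : forall x, 4/3 <= x < 2 -> 0 < g x).

Local Notation y := (captured_sol g phi xa).

Lemma captured_sol_upper x : x <= 2 -> y x = g x.
Proof.
  intro Hx. unfold captured_sol. destruct (Rlt_dec x 2); [reflexivity|].
  replace x with 2 by lra. rewrite g_2. now destruct (Rlt_dec 2 4); [|lra].
Qed.

Lemma captured_sol_sliding x : 2 <= x <= 4 -> y x = 0.
Proof.
  intro Hx. unfold captured_sol. destruct (Rlt_dec x 2); [lra|].
  destruct (Rlt_dec x 4); [reflexivity|]. replace x with (4 * INR 1) by (simpl; lra).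
  apply yd_period_start, phi_0.
Qed.

Lemma captured_sol_periodic x : 4 <= x -> y x = yd phi xa x.
Proof.
  intro Hx. unfold captured_sol. destruct (Rlt_dec x 2); [lra|].
  destruct (Rlt_dec x 4); [lra|reflexivity].
Qed.

Lemma yd_lipschitz_period (k : nat) : lipschitz_on (yd phi xa) (4 * INR k) (4 * INR k + 4).
Proof.
  apply lipschitz_on_glue with (4 * INR k + xa).
  - apply lipschitz_on_ext with (fun x => phi (x - 4 * INR k)).
    + rewrite <- (Rplus_0_l (4 * INR k)) at 1. rewrite (Rplus_comm _ xa).
      apply lipschitz_on_shift, (lipschitz_on_forced_linear a (fun x => sin (PI * x / 2)));
        [exact phi_derive | intro; reg].
    + intros x Hx. apply yd_on_phi_arc; assumption.
  - apply lipschitz_on_ext with (fun _ => 0); [apply lipschitz_on_const|].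
    intros x Hx. apply (yd_on_sliding_arc phi xa phi_0 k); [lra | exact Hx].
Qed.

Lemma captured_sol_lipschitz d : lipschitz_on y (3/2) d.
Proof.
  destruct (INR_unbounded (d / 4)) as [n Hn].
  apply lipschitz_on_sub with (3/2) (4 + INR n * 4); [|lra|lra].
  apply lipschitz_on_glue with 4; [apply lipschitz_on_glue with 2|apply lipschitz_on_chain].
  - apply lipschitz_on_ext with g; [|intros; apply captured_sol_upper; lra].
    apply (lipschitz_on_forced_linear a (fun x => sin (PI * x * (1 + 1/2))));
      [exact g_derive | intro; reg].
  - apply lipschitz_on_ext with (fun _ => 0); [apply lipschitz_on_const|].
    intros; apply captured_sol_sliding; lra.
  - intro k. replace (4 + INR k * 4) with (4 * INR (S k)) by (rewrite S_INR; ring).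
    replace (4 + INR (S k) * 4) with (4 * INR (S k) + 4) by (rewrite S_INR; ring).
    apply lipschitz_on_ext with (yd phi xa); [apply yd_lipschitz_period|].
    intros x Hx. pose proof (pos_INR k). rewrite S_INR in Hx.
    apply captured_sol_periodic. lra.
Qed.

Lemma captured_sol_filippov_periodic x : 4 < x -> ~ switch_point xa x -> filippov_at a y x.
Proof.
  intros Hx Hsw. destruct (decomp_period x ltac:(lra)) as [k [r [Hxkr Hr]]].
  assert (Hk : 1 <= INR k).
  { destruct k; [simpl in Hxkr; lra|]. rewrite S_INR. pose proof (pos_INR k). lra. }
  assert (Hr0 : r <> 0) by (intros ->; apply Hsw; right; exists k; left; lra).
  assert (Hra : r <> xa) by (intros ->; apply Hsw; right; exists k; right; lra).
  destruct (Rlt_dec r xa) as [Hrxa|Hrxa].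
  - apply (filippov_at_local a y (fun t => phi (t - 4 * INR k)) x
             (4 * INR k) (4 * INR k + xa) (-1)); [lra| | |].
    + intros t Ht. rewrite captured_sol_periodic by lra. apply yd_on_phi_arc; auto; lra.
    + right; left. split; [apply phi_neg; lra|reflexivity].
    + apply (is_derive_translate phi (- (4 * INR k))). unfold field.
      replace (PI * x * (1 + -1 / 2)) with (PI * (x + - (4 * INR k)) / 2 + 2 * INR k * PI)
        by (rewrite Hxkr; field).
      rewrite sin_period. apply phi_derive.
  - apply (filippov_at_zero a y x (4 * INR k + xa) (4 * INR k + 4)); [lra|lra|].
    intros t Ht. rewrite captured_sol_periodic by lra.
    apply (yd_on_sliding_arc phi xa phi_0 k); lra.
Qed.

Lemma captured_sol_filippov x : 3/2 < x -> ~ switch_point xa x -> filippov_at a y x.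
Proof.
  intros Hx Hsw.
  assert (Hx2 : x <> 2) by (intro; apply Hsw; now left).
  assert (Hx4 : x <> 4) by (intro; apply Hsw; right; exists 1%nat; left; simpl; lra).
  destruct (Rlt_dec x 2) as [Hlt2|Hge2]; [|destruct (Rlt_dec x 4) as [Hlt4|Hge4]].
  - apply (filippov_at_local a y g x (3/2) 2 1); [lra| | |apply g_derive].
    + intros t Ht. apply captured_sol_upper. lra.
    + left. split; [apply g_pos; lra|reflexivity].
  - apply (filippov_at_zero a y x 2 4); [lra|lra|].
    intros t Ht. apply captured_sol_sliding. lra.
  - apply captured_sol_filippov_periodic; [lra|exact Hsw].
Qed.

Lemma captured_sol_is_solution : is_solution a (3/2) y.
Proof.
  split; [lra|]. split.
  - intros d _. apply lipschitz_on_abs_cont, captured_sol_lipschitz.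
  - exists (switch_point xa). split; [apply switch_point_negligible|].
    exact captured_sol_filippov.
Qed.

Lemma captured_sol_nonpos x : 2 < x -> y x <= 0.
Proof.
  intro Hx. destruct (Rle_dec x 4); [rewrite captured_sol_sliding by lra; lra|].
  rewrite captured_sol_periodic by lra. apply yd_nonpos.
  intros r Hr. destruct (Req_dec r 0) as [->|]; [rewrite phi_0; lra|].
  left. apply phi_neg. lra.
Qed.

End Construction.

Theorem proposition3 :
  forall a : R, 0 < a ->
  forall (phi : R -> R) (xa : R),
    phi 0 = 0 ->
    (forall x, is_derive phi x (- a * phi x - sin (PI * x / 2))) ->
    0 < xa -> phi xa = 0 -> (forall x, 0 < x < xa -> phi x <> 0) ->
  exists (x0 : R) (y : R -> R),
    is_solution a x0 y /\ 0 < y x0 /\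
    exists xT : R,
      x0 < xT /\ y xT = 0 /\
      (forall x, x0 <= x < xT -> y x <> 0) /\
      (forall x, xT < x -> y x <= 0) /\
      exists n : nat, forall x, 4 * INR n <= x -> y x = yd phi xa x.
Proof.
  intros a Ha phi xa Hphi0 Hphi Hxa Hphixa Hnz.
  pose proof (phi_neg a phi xa Hphi0 Hphi Hnz) as Hneg.
  pose proof (first_zero_le4 a phi xa Ha Hphi0 Hphi Hnz) as Hxa4.
  destruct (upper_arc a ltac:(lra)) as [g [Hg2 [Hg Hgpos]]].
  exists (3/2), (captured_sol g phi xa).
  split; [now apply captured_sol_is_solution|].
  split; [rewrite captured_sol_upper by lra; apply Hgpos; lra|].
  exists 2. split; [lra|]. split; [now apply captured_sol_sliding; lra|]. split.
  { intros x Hx. rewrite captured_sol_upper by lra. enough (0 < g x) by lra. apply Hgpos; lra. }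
  split; [intros; now apply (captured_sol_nonpos phi g xa)|].
  exists 1%nat. intros x Hx. apply captured_sol_periodic. simpl in Hx. lra.
Qed.
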